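(* Let $(\mathcal{V},\otimes,1)$ be a commutative unital quantale with internal hom $[\_,\_]$, and for every set $X$ let $\Phi X=\mathbf{DPMet}_\mathcal{V}(X)$ ordered pointwise, with reindexing $f^*d=d\circ(f\times f)$ for $f\colon X\to Y$. Let $d_\mathcal{V}=[\_,\_]\in\Phi\mathcal{V}$. Define $\alpha_X(S)(x,x')=\bigwedge_{h\in S}[h(x),h(x')]$ for $S\subseteq\mathbf{Set}(X,\mathcal{V})$, $\gamma_X(d)=\{h\colon X\to\mathcal{V}\mid\forall x,x'.\ d(x,x')\le[h(x),h(x')]\}$, and $\mathrm{cl}_X=\gamma_X\circ\alpha_X$. Assume $\gamma$ is natural: $\{k\circ f\mid k\in\gamma_Y(d)\}=\gamma_X(f^*d)$ for all $f\colon X\to Y$, $d\in\Phi Y$. Let $F\colon\mathbf{Set}\to\mathbf{Set}$ be a functor and $(\mathit{ev}_\lambda\colon F\mathcal{V}\to\mathcal{V})_{\lambda\in\Lambda}$ maps, with $\lambda_X(h)=\mathit{ev}_\lambda\circ Fh$ and $\Lambda_X(S)=\{\lambda_X(h)\mid\lambda\in\Lambda,h\in S\}$. Let $\mathrm{cl}'_X(S)$ be the least set of maps $X\to\mathcal{V}$ containing $S$ and closed under arbitrary (including empty) pointwise meets, positive scaling $h\mapsto h(\_)\otimes v$ and negative scaling $h\mapsto[v,h(\_)]$ for all $v\in\mathcal{V}$. If each $\lambda\in\Lambda$ is sup-preserving, i.e. $\lambda_X(\bigvee P)=\bigvee\{\lambda_X(p)\mid p\in P\}$ (pointwise joins) for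 every set $X$ and every $P\subseteq\mathbf{Set}(X,\mathcal{V})$, then $\mathrm{cl}'_X$ is compatible: $\Lambda_X(\mathrm{cl}'_X(\mathrm{cl}_X(S)))\subseteq\mathrm{cl}_{FX}(\Lambda_X(\mathrm{cl}'_X(S)))$ for all $X$ and $S\subseteq\mathbf{Set}(X,\mathcal{V})$.
   Context: A quantale is a complete lattice with an associative, commutative, unital operation $\otimes$ distributing over arbitrary joins; $[y,z]$ is defined by $x\otimes y\le z\iff x\le[y,z]$. $\mathbf{DPMet}_\mathcal{V}(X)$ is the set of directed $\mathcal{V}$-valued pseudometrics on $X$: maps $d\colon X\times X\to\mathcal{V}$ with $d(x,x)\ge1$ and $d(x,z)\ge d(x,y)\otimes d(y,z)$. (In this setting $\mathrm{cl}'_X$ is a subclosure of $\mathrm{cl}_X$.) *)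

Record quantale := Quantale {
  qcar :> Type;
  le : qcar -> qcar -> Prop;
  join : (qcar -> Prop) -> qcar;
  tensor : qcar -> qcar -> qcar;
  qunit : qcar;
  hom : qcar -> qcar -> qcar;
  le_refl : forall a, le a a;
  le_trans : forall a b c, le a b -> le b c -> le a c;
  le_antisym : forall a b, le a b -> le b a -> a = b;
  join_ub : forall (A : qcar -> Prop) a, A a -> le a (join A);
  join_least : forall (A : qcar -> Prop) b, (forall a, A a -> le a b) -> le (join A) b;
  tensorA : forall a b c, tensor a (tensor b c) = tensor (tensor a b) c;
  tensorC : forall a b, tensor a b = tensor b a;
  tensor1 : forall a, tensor a qunit = a;
  tensor_join : forall a (A : qcar -> Prop),
      tensor a (join A) = join (fun c => exists b, A b /\ c = tensor a b);
  hom_adj : forall x y z, le (tensor x y) z <-> le x (hom y z)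
}.

Arguments le {q}. Arguments join {q}. Arguments tensor {q}. Arguments hom {q}. Arguments qunit {q}.

Set Implicit Arguments.
Section Defs.
Variable V : quantale.

Definition meet (A : V -> Prop) : V := join (fun v => forall a, A a -> le v a).

Definition isDPMet (X : Type) (d : X -> X -> V) : Prop :=
  (forall x, le qunit (d x x)) /\
  (forall x y z, le (tensor (d x y) (d y z)) (d x z)).

Definition reindex (X Y : Type) (f : X -> Y) (d : Y -> Y -> V) : X -> X -> V :=
  fun x x' => d (f x) (f x').

Definition dV : V -> V -> V := @hom V.

Definition alpha (X : Type) (S : (X -> V) -> Prop) : X -> X -> V :=
  fun x x' => meet (fun v => exists h, S h /\ v = hom (h x) (h x')).

Definition gamma (X : Type) (d : X -> X -> V) : (X -> V) -> Prop :=
  fun h => forall x x', le (d x x') (hom (h x) (h x')).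

Definition cl (X : Type) (S : (X -> V) -> Prop) : (X -> V) -> Prop :=
  gamma (alpha S).

Definition closed_cl' (X : Type) (T : (X -> V) -> Prop) : Prop :=
  (forall P : (X -> V) -> Prop, (forall h, P h -> T h) ->
      T (fun x => meet (fun v => exists h, P h /\ v = h x))) /\
  (forall h v, T h -> T (fun x => tensor (h x) v)) /\
  (forall h v, T h -> T (fun x => hom v (h x))).

Definition cl' (X : Type) (S : (X -> V) -> Prop) : (X -> V) -> Prop :=
  fun h => forall T : (X -> V) -> Prop,
    (forall g, S g -> T g) -> closed_cl' T -> T h.

Definition gamma_natural : Prop :=
  forall (X Y : Type) (f : X -> Y) (d : Y -> Y -> V), isDPMet d ->
    forall h : X -> V,
      (exists k, gamma d k /\ h = (fun x => k (f x))) <-> gamma (reindex f d) h.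

Definition is_functor (F : Type -> Type) (fmap : forall X Y, (X -> Y) -> F X -> F Y)
  : Prop :=
  (forall X (u : F X), fmap X X (fun x => x) u = u) /\
  (forall X Y Z (f : X -> Y) (g : Y -> Z) (u : F X),
      fmap X Z (fun x => g (f x)) u = fmap Y Z g (fmap X Y f u)).

Variables (F : Type -> Type) (fmap : forall X Y, (X -> Y) -> F X -> F Y).
Variables (L : Type) (ev : L -> F V -> V).

Definition lam (l : L) {X : Type} (h : X -> V) : F X -> V :=
  fun u => ev l (@fmap X V h u).

Definition Lam (X : Type) (S : (X -> V) -> Prop) : (F X -> V) -> Prop :=
  fun g => exists l h, S h /\ g = lam l h.

Definition sup_preserving (l : L) : Prop :=
  forall (X : Type) (P : (X -> V) -> Prop) (u : F X),
    lam l (fun x => join (fun v => exists p, P p /\ v = p x)) u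
    = join (fun v => exists p, P p /\ v = lam l p u).

End Defs.

(** Everything rests on two observations.  First, every set of the form
    gamma_X(d) is closed under the operations defining cl', so
    cl'_X(cl_X(S)) = cl_X(S).  Second, every h in cl_X(S) is the pointwise
    join of the maps  x |-> alpha_X(S)(x', x) ⊗ h(x'),  x' in X, each of which
    is a positive scaling of a meet of negative scalings of maps in S, hence
    lies in cl'_X(S).  A sup-preserving lambda sends this join to a join of
    maps in Lambda_X(cl'_X(S)), and gamma of anything is closed under
    pointwise joins, so the join lies in cl_{FX}(Lambda_X(cl'_X(S))). *)

From Stdlib Require Import FunctionalExtensionality.

Set Implicit Arguments.

Section QuantaleFacts.
Variable V : quantale.

Lemma meet_lb (A : V -> Prop) (a : V) : A a -> le (meet V A) a.
Proof. intros Aa. apply join_least. intros v Hv. exact (Hv a Aa). Qed.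

Lemma meet_glb (A : V -> Prop) (b : V) : (forall a, A a -> le b a) -> le b (meet V A).
Proof. intros Hb. apply join_ub. exact Hb. Qed.

Lemma tensor_monol (a b c : V) : le a b -> le (tensor a c) (tensor b c).
Proof.
  intros Hab. apply hom_adj. apply le_trans with b; [exact Hab |].
  apply hom_adj, le_refl.
Qed.

Lemma tensor_monor (a b c : V) : le a b -> le (tensor c a) (tensor c b).
Proof. intros Hab. rewrite !(tensorC _ c). now apply tensor_monol. Qed.

Lemma hom_eval (v w : V) : le (tensor (hom v w) v) w.
Proof. apply hom_adj, le_refl. Qed.

Lemma unit_le_hom_refl (v : V) : le qunit (hom v v).
Proof. apply hom_adj. rewrite tensorC, tensor1. apply le_refl. Qed.

End QuantaleFacts.

Section Closures.
Variables (V : quantale) (X : Type).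

Lemma gamma_closed_cl' (d : X -> X -> V) : closed_cl' V (gamma V d).
Proof.
  split; [| split].
  - intros P HP x x'. apply hom_adj, meet_glb. intros a [p [Pp ->]].
    apply le_trans with (tensor (d x x') (p x)).
    + apply tensor_monor, meet_lb. now exists p.
    + apply hom_adj, HP, Pp.
  - intros h v Hh x x'. apply hom_adj. rewrite tensorA.
    apply tensor_monol, hom_adj, Hh.
  - intros h v Hh x x'. do 2 apply -> hom_adj. rewrite <- tensorA.
    apply le_trans with (tensor (d x x') (h x)).
    + apply tensor_monor, hom_eval.
    + apply hom_adj, Hh.
Qed.

Lemma gamma_join (d : X -> X -> V) (I : Type) (P : I -> Prop) (f : I -> X -> V) :
  (forall i, P i -> gamma V d (f i)) ->
  gamma V d (fun x => join (fun v => exists i, P i /\ v = f i x)).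
Proof.
  intros Hf x x'. apply hom_adj. rewrite tensor_join. apply join_least.
  intros a [b [[i [Pi ->]] ->]].
  apply le_trans with (f i x'); [apply hom_adj, Hf, Pi |].
  apply join_ub. now exists i.
Qed.

Lemma cl_extensive (S : (X -> V) -> Prop) (h : X -> V) : S h -> cl V S h.
Proof. intros Sh x x'. apply meet_lb. now exists h. Qed.

Lemma cl_join (T : (X -> V) -> Prop) (I : Type) (P : I -> Prop) (f : I -> X -> V) :
  (forall i, P i -> T (f i)) ->
  cl V T (fun x => join (fun v => exists i, P i /\ v = f i x)).
Proof. intros Hf. apply gamma_join. intros i Pi. now apply cl_extensive, Hf. Qed.

Variable S : (X -> V) -> Prop.

Lemma cl'_extensive (h : X -> V) : S h -> cl' V S h.
Proof. intros Sh T HT _. now apply HT. Qed.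

Lemma cl'_closed : closed_cl' V (cl' V S).
Proof.
  split; [| split].
  - intros P HP T HST HT. apply (proj1 HT). intros h Ph. now apply HP.
  - intros h v Hh T HST HT. apply (proj1 (proj2 HT)). now apply Hh.
  - intros h v Hh T HST HT. apply (proj2 (proj2 HT)). now apply Hh.
Qed.

Lemma cl'_cl (h : X -> V) : cl' V (cl V S) h -> cl V S h.
Proof. intros Hh. apply Hh; [exact (fun _ Hg => Hg) | apply gamma_closed_cl']. Qed.

Lemma alpha_refl (x : X) : le qunit (alpha V S x x).
Proof. apply meet_glb. intros a [s [_ ->]]. apply unit_le_hom_refl. Qed.

Lemma cl'_alpha (x' : X) : cl' V S (alpha V S x').
Proof.
  pose (P := fun q : X -> V => exists s, S s /\ q = fun x => hom (s x') (s x)).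
  replace (alpha V S x') with (fun x => meet V (fun v => exists q, P q /\ v = q x)).
  - apply cl'_closed. intros q [s [Ss ->]].
    apply cl'_closed, cl'_extensive, Ss.
  - extensionality x. apply le_antisym; apply meet_glb.
    + intros a [s [Ss ->]]. apply meet_lb. exists (fun y => hom (s x') (s y)).
      split; [now exists s | reflexivity].
    + intros a [q [[s [Ss ->]] ->]]. apply meet_lb. now exists s.
Qed.

Lemma cl_as_join (h : X -> V) : cl V S h ->
  h = fun x => join (fun v => exists p,
        (exists x', p = fun y => tensor (alpha V S x' y) (h x')) /\ v = p x).
Proof.
  intros Hh. extensionality x. apply le_antisym.
  - apply le_trans with (tensor (alpha V S x x) (h x)).
    + rewrite tensorC. apply le_trans with (tensor (h x) qunit).
      * rewrite tensor1. apply le_refl.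
      * apply tensor_monor, alpha_refl.
    + apply join_ub. exists (fun y => tensor (alpha V S x y) (h x)).
      split; [now exists x | reflexivity].
  - apply join_least. intros a [p [[x' ->] ->]]. apply hom_adj, Hh.
Qed.

End Closures.

Lemma lam_join (V : quantale) (F : Type -> Type)
  (fmap : forall X Y : Type, (X -> Y) -> F X -> F Y) (L : Type) (ev : L -> F V -> V)
  (l : L) (X : Type) (P : (X -> V) -> Prop) :
  sup_preserving V F fmap ev l ->
  lam V F fmap ev l (fun x => join (fun v => exists p, P p /\ v = p x))
  = fun u => join (fun v => exists p, P p /\ v = lam V F fmap ev l p u).
Proof. intros Hl. extensionality u. apply Hl. Qed.

Theorem proposition5 (V : quantale)
  (F : Type -> Type) (fmap : forall X Y : Type, (X -> Y) -> F X -> F Y)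
  (HF : is_functor F fmap)
  (L : Type) (ev : L -> F V -> V)
  (Hgamma : gamma_natural V)
  (Hsup : forall l : L, @sup_preserving V F fmap L ev l) :
  forall (X : Type) (S : (X -> V) -> Prop) (g : F X -> V),
    @Lam V F fmap L ev X (@cl' V X (@cl V X S)) g ->
    @cl V (F X) (@Lam V F fmap L ev X (@cl' V X S)) g.
Proof.
  intros X S g [l [h [Hh ->]]].
  rewrite (cl_as_join (cl'_cl Hh)).
  rewrite (lam_join _ (Hsup l)).
  apply cl_join. intros p [x' ->].
  exists l, (fun y => tensor (alpha V S x' y) (h x')). split; [| reflexivity].
  apply cl'_closed, cl'_alpha.
Qed.
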